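(* Let $(P,\le)$ be a poset and $i\in\{1,2,3\}$. If $(x_n)_{n\in\mathbb N}$ is a sequence in $P$ converging to a point $x\in P$ with respect to $\tau^\omega_{O_i}(P)$, then there exists a subsequence $(x_{n_k})_{k\in\mathbb N}$ that O$_i$-converges to $x$.
   Context: For monotone nets, $y_\gamma\uparrow y$ means increasing with supremum $y$, $z_\gamma\downarrow y$ decreasing with infimum $y$; $[a,b]:=\{t:a\le t\le b\}$; directed/filtered sets are nonempty sets in which finite subsets have upper/lower bounds in the set. A net $(x_\gamma)_{\gamma\in\Gamma}$ O$_1$-converges to $x$ if there are nets $(y_\gamma)_{\gamma\in\Gamma}$, $(z_\gamma)_{\gamma\in\Gamma}$ with eventually $y_\gamma\le x_\gamma\le z_\gamma$, $y_\gamma\uparrow x$, $z_\gamma\downarrow x$; it O$_2$-converges to $x$ if there are directed $M$ and filtered $N$ with $\sup M=\inf N=x$ such that for every $(m,n)\in M\times N$ the net is eventually in $[m,n]$; it O$_3$-converges to $x$ if the same holds with $M,N$ arbitrary subsets with $\sup M=\inf N=x$. A subset $X\subseteq P$ is O$^\omega_i$-closed if no sequence in $X$ O$_i$-converges to a point outside $X$; these sets are the closed sets of the topology $\tau^\omega_{O_i}(P)$. *)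

From mathcomp Require Import all_boot all_order.
Set Implicit Arguments. Unset Strict Implicit. Unset Printing Implicit Defensive.
Import Order.TTheory.
Local Open Scope order_scope.

Section OrderConv.
Context {d : Order.disp_t} {P : porderType d}.

Definition is_upper (M : P -> Prop) (u : P) := forall m, M m -> m <= u.
Definition is_lower (M : P -> Prop) (u : P) := forall m, M m -> u <= m.
Definition is_sup (M : P -> Prop) (x : P) :=
  is_upper M x /\ forall u, is_upper M u -> x <= u.
Definition is_inf (N : P -> Prop) (x : P) :=
  is_lower N x /\ forall u, is_lower N u -> u <= x.

(* directed: nonempty and every finite subset has an upper bound in the set
   (nonemptiness is the case of the empty finite subset) *)
Definition directed (M : P -> Prop) :=
  forall s : seq P, (forall m, m \in s -> M m) ->
    exists2 u, M u & forall m, m \in s -> m <= u.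
Definition filtered (N : P -> Prop) :=
  forall s : seq P, (forall m, m \in s -> N m) ->
    exists2 u, N u & forall m, m \in s -> u <= m.

Definition eventually (Q : nat -> Prop) := exists n0, forall n, (n0 <= n)%N -> Q n.

Definition incr_to (y : nat -> P) (x : P) :=
  (forall m n, (m <= n)%N -> y m <= y n) /\ is_sup (fun p => exists n, y n = p) x.
Definition decr_to (z : nat -> P) (x : P) :=
  (forall m n, (m <= n)%N -> z n <= z m) /\ is_inf (fun p => exists n, z n = p) x.

Inductive Okind := O1 | O2 | O3.

Definition Oconv (i : Okind) (x : nat -> P) (l : P) : Prop :=
  match i with
  | O1 => exists y z : nat -> P,
      eventually (fun n => y n <= x n /\ x n <= z n) /\ incr_to y l /\ decr_to z l
  | O2 => exists (M N : P -> Prop), directed M /\ filtered N /\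
      is_sup M l /\ is_inf N l /\
      forall m n, M m -> N n -> eventually (fun k => m <= x k /\ x k <= n)
  | O3 => exists (M N : P -> Prop),
      is_sup M l /\ is_inf N l /\
      forall m n, M m -> N n -> eventually (fun k => m <= x k /\ x k <= n)
  end.

Definition Oomega_closed (i : Okind) (X : P -> Prop) : Prop :=
  forall (s : nat -> P) (l : P), (forall n, X (s n)) -> Oconv i s l -> X l.

Definition Oomega_open (i : Okind) (U : P -> Prop) : Prop :=
  Oomega_closed i (fun p => ~ U p).

Definition tau_conv (i : Okind) (x : nat -> P) (l : P) : Prop :=
  forall U, Oomega_open i U -> U l -> eventually (fun n => U (x n)).

End OrderConv.

From mathcomp Require Import all_boot all_order.
From mathcomp Require Import zify.
From Stdlib Require Import Classical ClassicalEpsilon FunctionalExtensionality.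
Set Implicit Arguments. Unset Strict Implicit. Unset Printing Implicit Defensive.
Import Order.TTheory.

(* Suppose no subsequence of x O_i-converges to l.  Passing to subsequences we
   may assume that x_n <> l for all n and that any two O_i-limits of
   subsequences of x coincide, unless one of them is a degenerate O_3-limit
   (a greatest or least element, which is a limit of every sequence).  The set
   of terms of x together with all these subsequential limits is then
   O^omega_i-closed, since every sequence in it has a subsequence that is
   either constant or a subsequence of x.  Its complement is an open set
   containing l that no x_n enters, contradicting tau-convergence. *)

Definition strict_incr (phi : nat -> nat) := forall k, (phi k < phi k.+1)%N.

Lemma strict_incr_homo phi : strict_incr phi -> {homo phi : m n / (m < n)%N}.
Proof. by move=> hphi; apply: homo_ltn => //; apply: ltn_trans. Qed.

Lemma strict_incr_leq phi : strict_incr phi -> {homo phi : m n / (m <= n)%N}.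
Proof. by move=> /strict_incr_homo/leq_mono mono m n; rewrite mono. Qed.

Lemma strict_incr_ge phi : strict_incr phi -> forall k, (k <= phi k)%N.
Proof. by move=> hphi; elim=> // k IH; apply: leq_ltn_trans IH (hphi k). Qed.

Lemma strict_incr_comp phi psi :
  strict_incr phi -> strict_incr psi -> strict_incr (fun k => phi (psi k)).
Proof. by move=> hphi hpsi k; apply: strict_incr_homo. Qed.

Lemma strict_incr_chain (R : nat -> nat -> Prop) :
  (forall m, exists2 n, (m < n)%N & R m n) ->
  exists2 phi, strict_incr phi & forall k, R (phi k) (phi k.+1).
Proof.
move=> hR.
have [next hnext] : exists next, forall m, (m < next m)%N /\ R m (next m).
  by apply: (choice (fun m n => (m < n)%N /\ R m n)) => m; have [n] := hR m; exists n.
by exists (fun k => iter k next 0) => k; case: (hnext (iter k next 0)).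
Qed.

Definition frequently (Q : nat -> Prop) := forall m, exists2 n, (m < n)%N & Q n.

Lemma frequently_subseq (Q : nat -> Prop) :
  frequently Q -> exists2 phi, strict_incr phi & forall k, Q (phi k).
Proof.
move=> hQ; have [phi hphi hQphi] := strict_incr_chain (R := fun _ n => Q n) hQ.
by exists (fun k => phi k.+1) => // k; apply: hphi.
Qed.

Lemma not_frequently (Q : nat -> Prop) :
  ~ frequently Q -> eventually (fun n => ~ Q n).
Proof.
move=> hQ; apply: NNPP => hev; apply: hQ => m; apply: NNPP => hm.
by apply: hev; exists m.+1 => n hn hQn; apply: hm; exists n.
Qed.

Lemma subseq_in_union (Q R : nat -> Prop) : (forall n, Q n \/ R n) ->
  exists2 phi, strict_incr phi & (forall k, Q (phi k)) \/ (forall k, R (phi k)).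
Proof.
move=> hQR; case: (classic (frequently Q)) => [/frequently_subseq [phi hphi hQphi]|].
  by exists phi; [|left].
move=> /not_frequently [m hm]; exists (fun k => k + m)%N; first by move=> k; lia.
by right=> k; case: (hQR (k + m)%N) => // /(hm _ (leq_addl _ _)).
Qed.

Lemma constant_or_increasing_subseq (f : nat -> nat) :
  exists2 phi, strict_incr phi &
    (exists v, forall k, f (phi k) = v) \/ strict_incr (fun k => f (phi k)).
Proof.
case: (classic (exists v, frequently (fun n => f n = v))) => [[v hv]|hfin].
  by have [phi hphi hfphi] := frequently_subseq hv; exists phi => //; left; exists v.
have hgrow B : eventually (fun n => B < f n)%N.
  have hvalue v : eventually (fun n => f n <> v).
    by apply: not_frequently => hv; apply: hfin; exists v.
  elim: B => [|B [m1 hm1]].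
    by have [m hm] := hvalue 0%N; exists m => n /hm; lia.
  have [m2 hm2] := hvalue B.+1; exists (maxn m1 m2) => n hn.
  have := hm1 n ltac:(lia); have := hm2 n ltac:(lia); lia.
have hstep m : exists2 n, (m < n)%N & (f m < f n)%N.
  have [m' hm'] := hgrow (f m).
  by exists (maxn m' m.+1); [lia | apply: hm'; lia].
have [phi hphi hfphi] := strict_incr_chain (R := fun m n => f m < f n)%N hstep.
by exists phi => //; right.
Qed.

Lemma eventually_subseq (Q : nat -> Prop) phi :
  strict_incr phi -> eventually Q -> eventually (fun k => Q (phi k)).
Proof.
by move=> hphi [n0 hQ]; exists n0 => k hk; apply: hQ; apply: leq_trans hk (strict_incr_ge hphi k).
Qed.

Lemma eventually_common (Q R : nat -> Prop) :
  eventually Q -> eventually R -> exists k, Q k /\ R k.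
Proof. by move=> [a hQ] [b hR]; exists (maxn a b); split; [apply: hQ | apply: hR]; lia. Qed.

Section OrderConvergence.
Context {d : Order.disp_t} {P : porderType d}.
Local Open Scope order_scope.
Implicit Types (s x y : nat -> P) (p q c l : P) (M N F G : P -> Prop) (phi psi : nat -> nat).

Definition brackets s M N :=
  forall m n, M m -> N n -> eventually (fun k => m <= s k /\ s k <= n).

Lemma brackets_subseq s M N phi :
  strict_incr phi -> brackets s M N -> brackets (fun k => s (phi k)) M N.
Proof. by move=> hphi hs m n hm hn; apply: eventually_subseq (hs m n hm hn). Qed.

Lemma brackets_cst s c : (forall n, s n = c) -> brackets s (fun p => p = c) (fun p => p = c).
Proof. by move=> hs m n -> ->; exists 0%N => k _; rewrite hs. Qed.

Lemma is_sup_single c : is_sup (fun p => p = c) c.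
Proof. by split=> [_ -> | u]; [|apply]. Qed.

Lemma is_inf_single c : is_inf (fun p => p = c) c.
Proof. by split=> [_ -> | u]; [|apply]. Qed.

Lemma incr_to_subseq y q phi :
  strict_incr phi -> incr_to y q -> incr_to (fun k => y (phi k)) q.
Proof.
move=> hphi [hy [hub hleast]]; split; first by move=> m n /(strict_incr_leq hphi)/hy.
split; first by move=> _ [k <-]; apply: hub; exists (phi k).
move=> u hu; apply: hleast => _ [n <-]; apply: le_trans (hy _ _ (strict_incr_ge hphi n)) _.
by apply: hu; exists n.
Qed.

Lemma decr_to_subseq y q phi :
  strict_incr phi -> decr_to y q -> decr_to (fun k => y (phi k)) q.
Proof.
move=> hphi [hy [hlb hgreatest]]; split; first by move=> m n /(strict_incr_leq hphi)/hy.
split; first by move=> _ [k <-]; apply: hlb; exists (phi k).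
move=> u hu; apply: hgreatest => _ [n <-]; apply: le_trans _ (hy _ _ (strict_incr_ge hphi n)).
by apply: hu; exists n.
Qed.

Lemma Oconv_subseq i s q phi :
  strict_incr phi -> Oconv i s q -> Oconv i (fun k => s (phi k)) q.
Proof.
move=> hphi; case: i => /=.
- move=> [y [z [hev [hy hz]]]]; exists (fun k => y (phi k)), (fun k => z (phi k)).
  split; first exact: (eventually_subseq (Q := fun n => y n <= s n /\ s n <= z n)).
  by split; [apply: incr_to_subseq | apply: decr_to_subseq].
- move=> [M [N [hM [hN [hsup [hinf hs]]]]]]; exists M, N.
  by do 4 split => //; apply: brackets_subseq.
- move=> [M [N [hsup [hinf hs]]]]; exists M, N.
  by do 2 split => //; apply: brackets_subseq.
Qed.

Lemma Oconv_cst i s c : (forall n, s n = c) -> Oconv i s c.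
Proof.
move=> hs; case: i => /=.
- exists (fun _ => c), (fun _ => c); split; first by exists 0%N => n _; rewrite hs.
  by do 2 split => //; split=> [_ [_ <-] // | u hu]; apply: hu; exists 0%N.
- exists (fun p => p = c), (fun p => p = c).
  split; first by move=> t ht; exists c => // m /ht ->.
  split; first by move=> t ht; exists c => // m /ht ->.
  by split; [apply: is_sup_single | split; [apply: is_inf_single | apply: brackets_cst]].
- exists (fun p => p = c), (fun p => p = c).
  by split; [apply: is_sup_single | split; [apply: is_inf_single | apply: brackets_cst]].
Qed.

(* With M or N empty, a greatest or least element is an O_3-limit of every
   sequence. *)
Definition degenerate i q :=
  if i is O3 then (forall u, u <= q) \/ (forall u, q <= u) else False.

Lemma degenerate_Oconv i s q : degenerate i q -> Oconv i s q.
Proof.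
case: i => //= -[qtop|qbot].
- exists (fun p => p = q), (fun _ => False).
  split; first exact: is_sup_single.
  by split; [split=> [? [] | u _]; apply: qtop | move=> ? ? _ []].
- exists (fun _ => False), (fun p => p = q).
  split; first by split=> [? [] | u _]; apply: qbot.
  by split; [apply: is_inf_single | move=> ? ? []].
Qed.

(* A common weakening of the three convergences (away from degenerate limits)
   in which limits are unique. *)
Definition O3conv_ne s q := exists M N, (exists m, M m) /\ (exists n, N n) /\
  is_sup M q /\ is_inf N q /\ brackets s M N.

Lemma Oconv_O3conv_ne i s q : Oconv i s q -> ~ degenerate i q -> O3conv_ne s q.
Proof.
case: i => /=.
- move=> [y [z [[n0 hev] [[hy hsup] [hz hinf]]]]] _.
  exists (fun p => exists n, y n = p), (fun p => exists n, z n = p).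
  do 2 (split; first by eexists; exists 0%N).
  do 2 (split; first by []).
  move=> _ _ [a <-] [b <-]; exists (maxn n0 (maxn a b)) => k hk.
  have [hyk hzk] := hev k ltac:(lia).
  by split; [apply: le_trans (hy a k _) hyk | apply: le_trans hzk (hz b k _)]; lia.
- move=> [M [N [hM [hN hrest]]]] _; exists M, N.
  have [m hm _] := hM [::] ltac:(done).
  have [n hn _] := hN [::] ltac:(done).
  by split; [exists m | split; [exists n |]].
- move=> [M [N [hsup [hinf hs]]]] hq; exists M, N.
  split; [|split; last by []].
  + apply: NNPP => hM; apply: hq; right => u; apply: hsup.2 => m hm.
    by case: hM; exists m.
  + apply: NNPP => hN; apply: hq; left => u; apply: hinf.2 => n hn.
    by case: hN; exists n.
Qed.

Lemma O3conv_ne_le s q q' : O3conv_ne s q -> O3conv_ne s q' -> q <= q'.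
Proof.
move=> [M [N [_ [[n hn] [hsup [_ hs]]]]]] [M' [N' [[m' hm'] [_ [_ [hinf' hs']]]]]].
apply: hinf'.2 => n' hn'; apply: hsup.2 => m hm.
have [k [[hmk _] [_ hkn']]] := eventually_common (hs m n hm hn) (hs' m' n' hm' hn').
exact: le_trans hmk hkn'.
Qed.

Lemma O3conv_ne_uniq s q q' : O3conv_ne s q -> O3conv_ne s q' -> q = q'.
Proof.
by move=> h h'; apply/le_anti/andP; split; [apply: O3conv_ne_le h h' | apply: O3conv_ne_le h' h].
Qed.

Lemma O3conv_ne_subseq s q phi :
  strict_incr phi -> O3conv_ne s q -> O3conv_ne (fun k => s (phi k)) q.
Proof.
move=> hphi [M [N [hM [hN [hsup [hinf hs]]]]]]; exists M, N.
by do 4 split => //; apply: brackets_subseq.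
Qed.

Lemma O3conv_ne_cst_eq s c q : (forall n, s n = c) -> O3conv_ne s q -> q = c.
Proof.
move=> hs hq; apply: O3conv_ne_uniq hq _; exists (fun p => p = c), (fun p => p = c).
do 2 (split; first by exists c).
by split; [apply: is_sup_single | split; [apply: is_inf_single | apply: brackets_cst]].
Qed.

Definition ne_closed F := forall s q, (forall n, F (s n)) -> O3conv_ne s q -> F q.

Lemma ne_closed_subsingleton F : (forall p p', F p -> F p' -> p = p') -> ne_closed F.
Proof.
move=> hF s q hs hq.
by rewrite (O3conv_ne_cst_eq (fun n => hF _ _ (hs n) (hs 0%N)) hq).
Qed.

Lemma ne_closed_union F G : ne_closed F -> ne_closed G -> ne_closed (fun p => F p \/ G p).
Proof.
move=> hF hG s q hs hq.
have [phi hphi [hFs|hGs]] := subseq_in_union (Q := fun n => F (s n)) hs.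
- by left; apply: hF hFs (O3conv_ne_subseq hphi hq).
- by right; apply: hG hGs (O3conv_ne_subseq hphi hq).
Qed.

Lemma ne_closed_degenerate i : ne_closed (degenerate i).
Proof.
case: i; try by move=> s q /(_ 0%N).
apply: ne_closed_union; apply: ne_closed_subsingleton => p p' hp hp'.
- by apply/le_anti/andP; split; [apply: hp' | apply: hp].
- by apply/le_anti/andP; split; [apply: hp | apply: hp'].
Qed.

Definition subseq_limit i y q :=
  exists phi, strict_incr phi /\ Oconv i (fun k => y (phi k)) q.

Lemma subseq_limit_trans i y q psi :
  strict_incr psi -> subseq_limit i (fun k => y (psi k)) q -> subseq_limit i y q.
Proof.
move=> hpsi [phi [hphi hq]]; exists (fun k => psi (phi k)).
by split => //; apply: strict_incr_comp.
Qed.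

Lemma degenerate_subseq_limit i y q : degenerate i q -> subseq_limit i y q.
Proof. by move=> hq; exists id; split => //; apply: degenerate_Oconv. Qed.

Definition subseq_limits_unique i y := forall q q',
  ~ degenerate i q -> ~ degenerate i q' -> subseq_limit i y q -> subseq_limit i y q' -> q = q'.

Lemma exists_subseq_limits_unique i y :
  exists2 psi, strict_incr psi & subseq_limits_unique i (fun k => y (psi k)).
Proof.
case: (classic (exists psi p,
  [/\ strict_incr psi, ~ degenerate i p & Oconv i (fun k => y (psi k)) p])).
- move=> [psi [p [hpsi hp hyp]]]; exists psi => // q q' hq hq'.
  suff equal_p r : ~ degenerate i r -> subseq_limit i (fun k => y (psi k)) r -> r = p.
    by move=> /(equal_p _ hq) -> /(equal_p _ hq') ->.
  move=> hr [phi [hphi hyr]]; apply: O3conv_ne_uniq (Oconv_O3conv_ne hyr hr) _.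
  exact: Oconv_O3conv_ne (Oconv_subseq hphi hyp) hp.
- move=> hnone; exists id => // q q' hq _ [phi [hphi hyq]].
  by case: hnone; exists phi, q.
Qed.

Lemma ne_closed_subseq_limit i y : subseq_limits_unique i y -> ne_closed (subseq_limit i y).
Proof.
move=> huniq s q hs hq.
have hsplit n : degenerate i (s n) \/ (~ degenerate i (s n) /\ subseq_limit i y (s n)).
  by case: (classic (degenerate i (s n))) => hn; [left | right].
have hnondeg : ne_closed (fun p => ~ degenerate i p /\ subseq_limit i y p).
  by apply: ne_closed_subsingleton => p p' [hp hlp] [hp' hlp']; apply: huniq.
by case: (ne_closed_union (ne_closed_degenerate (i := i)) hnondeg hsplit hq)
  => [/degenerate_subseq_limit | []].
Qed.

Lemma Oomega_closed_range_subseq_limits i y : subseq_limits_unique i y ->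
  Oomega_closed i (fun p => (exists k, p = y k) \/ subseq_limit i y p).
Proof.
move=> huniq s q hs hsq.
case: (classic (degenerate i q)) => [hq|hq]; first by right; apply: degenerate_subseq_limit.
have hlim := Oconv_O3conv_ne hsq hq.
have [phi hphi [hrange|hsub]] := subseq_in_union (Q := fun n => exists k, s n = y k) hs;
  last by right; apply: ne_closed_subseq_limit huniq _ _ hsub (O3conv_ne_subseq hphi hlim).
have [f hf] : exists f, forall k, s (phi k) = y (f k).
  by apply: (choice (fun k j => s (phi k) = y j)) => k; apply: hrange.
have [psi hpsi [[v hv]|hfpsi]] := constant_or_increasing_subseq f.
- left; exists v; apply: (O3conv_ne_cst_eq (s := fun k => s (phi (psi k)))).
    by move=> k; rewrite hf hv.
  exact: O3conv_ne_subseq (strict_incr_comp hphi hpsi) hlim.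
- right; exists (fun k => f (psi k)); split => //.
  have -> : (fun k => y (f (psi k))) = (fun k => s (phi (psi k))).
    by apply: functional_extensionality => k; rewrite hf.
  exact: Oconv_subseq (strict_incr_comp hphi hpsi) hsq.
Qed.

Lemma tau_conv_subseq i x l phi :
  strict_incr phi -> tau_conv i x l -> tau_conv i (fun k => x (phi k)) l.
Proof. by move=> hphi hx U hU hl; apply: eventually_subseq (hx U hU hl). Qed.

Lemma tau_conv_closed i x l (X : P -> Prop) :
  tau_conv i x l -> Oomega_closed i X -> (forall n, X (x n)) -> X l.
Proof.
move=> hx hX hxX; apply: NNPP => hl.
have hopen : Oomega_open i (fun p => ~ X p).
  by move=> s q hs hsq; apply; apply: hX hsq => n; apply: NNPP.
by have [n0 hn0] := hx _ hopen hl; apply: hn0 (leqnn n0) (hxX n0).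
Qed.

End OrderConvergence.

Theorem mainTheorem4 (d : Order.disp_t) (P : porderType d) (i : Okind)
  (x : nat -> P) (l : P) :
  tau_conv i x l ->
  exists phi : nat -> nat, (forall k, (phi k < phi k.+1)%N) /\
    Oconv i (fun k => x (phi k)) l.
Proof.
move=> hx; apply: NNPP => hl; change (~ subseq_limit i x l) in hl.
have [phi hphi [hxl|hxnl]] := subseq_in_union (fun n => classic (x n = l)).
  by apply: hl; exists phi; split => //; apply: Oconv_cst.
have [psi hpsi huniq] := exists_subseq_limits_unique i (fun k => x (phi k)).
have hy := tau_conv_subseq hpsi (tau_conv_subseq hphi hx).
have [[k hlk]|hlim] : (exists k, l = x (phi (psi k))) \/
    subseq_limit i (fun k => x (phi (psi k))) l.
  apply: tau_conv_closed hy (Oomega_closed_range_subseq_limits huniq) _.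
  by move=> n; left; exists n.
- by apply: (hxnl (psi k)); rewrite hlk.
- exact: hl (subseq_limit_trans hphi (subseq_limit_trans hpsi hlim)).
Qed.
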